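(* Let $\Delta$ be an S-map and $\mu$ a real number. Suppose every maximal semisimple S-submap of $\Delta$ satisfies the condition $\mathcal X(\mu)$. Let $S$ be the number of selected external edges of $\Delta$. Then $$S\ge(1-2\mu)\sum_{\Pi\in\Delta(2)}|\partial\Pi|.$$
   Context: A map is a connected subcomplex of an oriented combinatorial 2-sphere together with a set of cycles (its contours) such that each oriented edge lies either in the boundary cycle $\partial\Pi$ of some face $\Pi$ or in a contour of the map (and each oriented edge of the complex is counted once in the union of face boundaries and contours). $\Delta(1)$ and $\Delta(2)$ denote the sets of edges and faces; $|\partial\Pi|$ is the length of the boundary cycle of $\Pi$; $\|X\|$ is cardinality. An edge is external if at least one of its orientations lies on a contour of the map. A selection on a map is a set of nontrivial reduced subpaths of boundary cycles of faces, closed under taking nontrivial subpaths; an S-map is a map with a selection. An external edge is selected if an orientation of it lying on the boundary of a face is a selected path. A map is semisimple if every edge is incident to a face. A semisimple S-map $\Delta$ satisfies $\mathcal X(\mu)$ if the number $S$ of its selected external edges satisfies $S\ge\|\Delta(1)\|-\mu\sum_{\Pi\in\Delta(2)}|\partial\Pi|$. The maximal semisimple S-submaps of $\Delta$ are the S-submaps given by the connected components of the complex obtained from $\Delta$ by deleting all edges not incident to any face (with the induced contours and selection). *)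

From HB Require Import structures.
From mathcomp Require Import all_boot all_order all_algebra.
Set Implicit Arguments. Unset Strict Implicit. Unset Printing Implicit Defensive.
Import Order.TTheory GRing.Theory Num.Theory.

(* A map is encoded as an oriented combinatorial map on the sphere:
   - D       : darts = oriented edges of the complex;
   - inv     : reversal of orientation (fixed-point-free involution);
   - fc      : successor of a dart along the boundary walk of the region of the
               sphere to its left (a permutation). Its orbits are the boundary
               cycles of the 2-cells of the sphere: those marked by [isf] are the
               boundary cycles of the faces of the map, the others are the
               contours of the map. Hence every oriented edge lies exactly once
               either on a face boundary or on a contour.
   - vertices are the orbits of [fc \o inv] (darts with a common origin);
   - [sel]   : the selection, a set of paths (sequences of darts). *)

Section MapDefs.
Variable D : finType.
Variables (inv fc : D -> D) (isf : pred D) (sel : pred (seq D)).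

Definition glue : rel D := fun x y => (y == inv x) || (y == fc x).

Definition nverts := fcard (fc \o inv) D.
Definition nedges := fcard inv D.
Definition ncells := fcard fc D.

Definition face_subpath (p : seq D) : Prop :=
  exists2 d, isf d & 0 < size p <= order fc d /\ p = traject fc d (size p).

Definition reduced_path (p : seq D) : bool :=
  match p with [::] => true | x :: q => path (fun a b => b != inv a) x q end.

Definition is_Smap : Prop :=
  [/\ involutive inv, (forall d, inv d != d), injective fc &
      (forall d, isf (fc d) = isf d)] /\
      [/\ (forall x y, connect glue x y),
      (* the surface is a 2-sphere: Euler characteristic 2 (or the map is a
         single vertex without edges) *)
      (#|D| = 0 \/ nverts + ncells = nedges + 2),
      (forall p, sel p -> face_subpath p /\ reduced_path p) &
      (forall p q, sel p -> infix q p -> 0 < size q -> sel q)].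

Definition external (d : D) : bool := ~~ isf d || ~~ isf (inv d).
Definition selected (d : D) : bool :=
  (isf d && sel [:: d]) || (isf (inv d) && sel [:: inv d]).

Definition edge_rep (d : D) : bool := froots inv d.
Definition face_rep (d : D) : bool := isf d && froots fc d.

Definition n_edges_in (C : {set D}) : nat := #|[set d in C | edge_rep d]|.
Definition sel_ext_in (C : {set D}) : nat :=
  #|[set d in C | edge_rep d && external d && selected d]|.
Definition face_len_in (C : {set D}) : nat :=
  \sum_(d in C | face_rep d) order fc d.

Definition cond_X (R : realFieldType) (mu : R) (C : {set D}) : Prop :=
  ((n_edges_in C)%:R - mu * (face_len_in C)%:R <= (sel_ext_in C)%:R)%R.

Definition kept (d : D) : bool := isf d || isf (inv d).
Definition ss_link : rel D := fun x y =>
  [&& kept x, kept y & (y == inv x) || fconnect (fc \o inv) x y].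
(* darts of the connected component (after deleting the edges not incident to
   any face) containing the kept dart d0 *)
Definition ss_component (d0 : D) : {set D} := [set d | connect ss_link d0 d].

End MapDefs.

(* The maximal semisimple S-submaps partition the darts of the edges incident
   to some face, and the three counts (edges, selected external edges, total
   face length) are additive over this partition, so summing the hypotheses
   gives  E - mu F <= S, where E counts the edges incident to a face.  Each such
   edge has two sides; a side on a face boundary contributes to F, and a
   selected external edge has a side on no face, so  F + S <= 2 E.
   Eliminating E yields  (1 - 2 mu) F <= S. *)

From HB Require Import structures.
From mathcomp Require Import all_boot all_order all_algebra.
From mathcomp Require Import lra.
Import Order.TTheory GRing.Theory Num.Theory.

Set Implicit Arguments.
Unset Strict Implicit.
Unset Printing Implicit Defensive.

Section Counts.
Variables (D : finType) (inv fc : D -> D) (isf : pred D) (sel : pred (seq D)).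

Lemma n_edges_inE (C : {set D}) :
  n_edges_in inv C = \sum_(d in C) (edge_rep inv d : nat).
Proof.
rewrite /n_edges_in -sum1_card big_mkcond [RHS]big_mkcond.
by apply: eq_bigr => d _; rewrite inE; case: (d \in C) => //=; case: ifP => ->.
Qed.

Lemma sel_ext_inE (C : {set D}) :
  sel_ext_in inv isf sel C =
  \sum_(d in C) (edge_rep inv d && external inv isf d && selected inv isf sel d : nat).
Proof.
rewrite /sel_ext_in -sum1_card big_mkcond [RHS]big_mkcond.
by apply: eq_bigr => d _; rewrite inE; case: (d \in C) => //=; case: ifP => ->.
Qed.

Lemma face_len_inE (C : {set D}) :
  face_len_in fc isf C = \sum_(d in C) (if face_rep fc isf d then order fc d else 0).
Proof. exact: big_mkcondr. Qed.

Lemma sel_ext_in_kept :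
  sel_ext_in inv isf sel [set: D] = sel_ext_in inv isf sel [set d | kept inv isf d].
Proof.
apply: eq_card => d; rewrite !inE /selected /kept.
by case: (isf d); case: (isf (inv d)); rewrite ?andbF.
Qed.

Lemma face_len_in_kept :
  face_len_in fc isf [set: D] = face_len_in fc isf [set d | kept inv isf d].
Proof.
by apply: eq_bigl => d; rewrite !inE /face_rep /kept; case: (isf d); rewrite ?andbF.
Qed.

Lemma cond_X_partition (R : realFieldType) (mu : R) (P : {set {set D}}) A :
  partition P A -> {in P, forall C, cond_X inv fc isf sel mu C} ->
  cond_X inv fc isf sel mu A.
Proof.
move=> partP XP; rewrite /cond_X n_edges_inE sel_ext_inE face_len_inE.
rewrite !(set_partition_big _ partP) /= !natr_sum mulr_sumr -sumrB.
apply: ler_sum => C /XP; rewrite /cond_X.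
by rewrite n_edges_inE sel_ext_inE face_len_inE.
Qed.

End Counts.

Section SemisimpleComponents.
Variables (D : finType) (inv fc : D -> D) (isf : pred D).
Hypotheses (invK : involutive inv) (fc_inj : injective fc).

Local Notation link := (ss_link inv fc isf).
Local Notation kept_darts := [set d | kept inv isf d].

Lemma ss_link_sym : symmetric link.
Proof.
move=> x y; rewrite /ss_link andbCA; congr (_ && (_ && _)); congr (_ || _).
  by apply/eqP/eqP => ->; rewrite invK.
exact/fconnect_sym/inj_comp/can_inj.
Qed.

Lemma connect_ss_link_kept x y : x != y -> connect link x y -> kept inv isf y.
Proof.
move=> neq_xy; rewrite (sym_connect_sym ss_link_sym) => /connectP [[|z p]] /=.
  by move=> _ eq_xy; rewrite eq_xy eqxx in neq_xy.
by case/andP => /and3P [].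
Qed.

Definition ss_components := equivalence_partition (connect link) kept_darts.

Lemma ss_components_partition : partition ss_components kept_darts.
Proof.
apply: equivalence_partitionP => x y z _ _ _; split; first exact: connect0.
by move=> Cxy; exact: (same_connect (sym_connect_sym ss_link_sym) Cxy).
Qed.

Lemma ss_componentsP C :
  C \in ss_components -> exists2 x, kept inv isf x & C = ss_component inv fc isf x.
Proof.
case/imsetP => x; rewrite inE => kept_x ->; exists x => //.
apply/setP => y; rewrite !inE andbC; case: (eqVneq x y) => [<-|neq_xy].
  by rewrite connect0 kept_x.
by apply/andP/idP => [[] //|Cxy]; split=> //; apply: connect_ss_link_kept Cxy.
Qed.

End SemisimpleComponents.

Section EdgeSides.
Variables (D : finType) (inv : D -> D) (isf : pred D) (sel : pred (seq D)).
Hypothesis invK : involutive inv.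

Lemma fconnect_invol x y : fconnect inv x y = (y == x) || (y == inv x).
Proof.
apply/idP/idP => [/iter_findex <-|/orP [] /eqP ->]; last 2 first.
- exact: connect0.
- exact: fconnect1.
elim: (findex _ _ _) => [|n IHn] /=; first by rewrite eqxx.
by case/orP: IHn => /eqP ->; rewrite ?invK eqxx ?orbT.
Qed.

Lemma edge_rep_or_inv d : edge_rep inv d || edge_rep inv (inv d).
Proof.
have root_inv : froot inv (inv d) = froot inv d.
  apply/esym/(fingraph.rootP (fconnect_sym (can_inj invK))).
  by rewrite fconnect_invol eqxx orbT.
rewrite /edge_rep /roots root_inv.
by have := connect_root (frel inv) d; rewrite fconnect_invol.
Qed.

(* Every face dart is counted exactly once: on the edge representative when it
   is one, otherwise through the representative [inv d] of its edge. *)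
Lemma card_face_darts :
  #|isf| = \sum_d ((isf d && edge_rep inv d) + (isf (inv d) && ~~ edge_rep inv (inv d))).
Proof.
transitivity (\sum_d (isf d && edge_rep inv d : nat)
              + \sum_d (isf d && ~~ edge_rep inv d : nat)).
  rewrite -big_split -sum1_card big_mkcond /=; apply: eq_bigr => d _.
  by rewrite unfold_in; case: (isf d); case: (edge_rep inv d).
rewrite big_split /=; congr (_ + _).
exact: (reindex_inj (can_inj invK)).
Qed.

Lemma edge_sides_le d :
  (isf d && edge_rep inv d) + (isf (inv d) && ~~ edge_rep inv (inv d))
  + (edge_rep inv d && external inv isf d && selected inv isf sel d)
  <= 2 * (kept inv isf d && edge_rep inv d).
Proof.
have := edge_rep_or_inv d; rewrite /external /selected /kept.
by case: (edge_rep inv d); case: (edge_rep inv (inv d)); case: (isf d);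
  case: (isf (inv d)); case: (sel [:: d]); case: (sel [:: inv d]).
Qed.

Lemma face_darts_sel_ext_le :
  #|isf| + sel_ext_in inv isf sel [set: D] <= 2 * n_edges_in inv [set d | kept inv isf d].
Proof.
rewrite card_face_darts sel_ext_inE n_edges_inE.
rewrite [X in _ + X]big_mkcond [X in _ <= 2 * X]big_mkcond /=.
rewrite -big_split big_distrr /=; apply: leq_sum => d _.
by rewrite !inE /=; have := edge_sides_le d; case: (kept inv isf d).
Qed.

End EdgeSides.

Section FaceLength.
Variables (D : finType) (fc : D -> D) (isf : pred D).
Hypotheses (fc_inj : injective fc) (isf_fc : forall d, isf (fc d) = isf d).

Lemma face_len_setT : face_len_in fc isf [set: D] = #|isf|.
Proof.
have fc_sym : connect_sym (frel fc) := fconnect_sym fc_inj.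
have isf_closed : fclosed fc isf by move=> x y /eqP <-; rewrite !unfold_in isf_fc.
rewrite -sum1_card (partition_big (froot fc) (face_rep fc isf)) /=; last first.
  move=> d isf_d; rewrite /face_rep roots_root // andbT.
  by have := closed_connect isf_closed (connect_root _ d); rewrite !unfold_in => <-.
rewrite /face_len_in.
apply: eq_big => [r|r /andP [_ /andP [isf_r /eqP root_r]]]; first by rewrite inE.
rewrite sum1_card /order; apply: eq_card => d.
rewrite -[RHS]/((d \in isf) && (froot fc d == r)) -{2}root_r (root_connect fc_sym) fc_sym.
apply/idP/andP => [rd|[] //]; split=> //.
by have := closed_connect isf_closed rd; rewrite !unfold_in => <-.
Qed.
End FaceLength.

Lemma elim_edge_count (R : realFieldType) (mu F S E : R) :
  (F + S <= 2 * E -> E - mu * F <= S -> (1 - 2 * mu) * F <= S)%R.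
Proof. lra. Qed.

Theorem proposition4p1 (R : realFieldType) (mu : R) (D : finType)
  (inv fc : D -> D) (isf : pred D) (sel : pred (seq D)) :
  is_Smap inv fc isf sel ->
  (forall d0 : D, kept inv isf d0 ->
     cond_X inv fc isf sel mu (ss_component inv fc isf d0)) ->
  ((1 - 2 * mu) * (face_len_in fc isf [set: D])%:R
     <= (sel_ext_in inv isf sel [set: D])%:R)%R.
Proof.
move=> [[invK _ fc_inj isf_fc] _] X_components.
have X_kept : cond_X inv fc isf sel mu [set d | kept inv isf d].
  apply: (cond_X_partition (ss_components_partition isf invK fc_inj)).
  by move=> C /(ss_componentsP invK fc_inj) [x kept_x ->]; apply: X_components.
rewrite /cond_X -sel_ext_in_kept -face_len_in_kept in X_kept.
have budget := face_darts_sel_ext_le isf sel invK.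
rewrite -(face_len_setT fc_inj isf_fc) -(ler_nat R) natrD natrM in budget.
exact: elim_edge_count budget X_kept.
Qed.
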